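(* For each integer $N\ge1$, write $N=4m+k$ with $m\in\mathbb{N}$, $k\in\{0,1,2,3\}$, let $\alpha=((k+1)\bmod 4)-1$, and set $N_1^\star=(N-\alpha)/4$, $N_2^\star=(N+\alpha)/2$. Then $N_1^\star,N_2^\star$ are integers with $N_1^\star\ge0$, $N_2^\star\ge1$, the array $\mathbb{S}^\star(N)\triangleq\mathbb{D}_{\mathrm{CNA}}(N_1^\star,N_2^\star)$ has exactly $N$ elements, its sum set is $\mathbb{S}^\star(N)+\mathbb{S}^\star(N)=[0:2\max\mathbb{S}^\star(N)]$ with $$|\mathbb{S}^\star(N)+\mathbb{S}^\star(N)|=\frac{N^2+6N-7}{4}-\frac{(\alpha-1)^2}{4}+1,$$ and the redundancy $R(N)\triangleq\dfrac{N(N+1)}{2\,|\mathbb{S}^\star(N)+\mathbb{S}^\star(N)|}$ satisfies $\lim_{N\to\infty}R(N)=2$.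
   Context: For $N_1\in\mathbb{N}$, $N_2\ge1$: $\mathbb{D}_1=[0:N_1-1]$, $\mathbb{D}_2=\{j(N_1+1): j\in[0:N_2-1]\}$, and $\mathbb{D}_{\mathrm{CNA}}(N_1,N_2)=\mathbb{D}_1\cup(\mathbb{D}_2+N_1)\cup(\mathbb{D}_1+(N_1+1)N_2)\subset\mathbb{N}$. Sum set $\mathbb{A}+\mathbb{B}=\{a+b:a\in\mathbb{A},b\in\mathbb{B}\}$, shift $\mathbb{A}+c=\{a+c\}$, $[a:b]=\{c\in\mathbb{Z}:a\le c\le b\}$. *)

From HB Require Import structures.
From mathcomp Require Import all_boot all_order all_algebra.
From mathcomp Require Import all_classical all_reals all_analysis.
Set Implicit Arguments. Unset Strict Implicit. Unset Printing Implicit Defensive.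
Import Order.TTheory GRing.Theory Num.Theory.

(* Finite subsets of N are represented by duplicate-free sequences of nat. *)

Definition D1 (N1 : nat) : seq nat := iota 0 N1.
Definition D2 (N1 N2 : nat) : seq nat := [seq j * (N1 + 1) | j <- iota 0 N2].
Definition shift (A : seq nat) (c : nat) : seq nat := [seq a + c | a <- A].
Definition DCNA (N1 N2 : nat) : seq nat :=
  undup (D1 N1 ++ shift (D2 N1 N2) N1 ++ shift (D1 N1) ((N1 + 1) * N2)).
Definition sumset (A B : seq nat) : seq nat :=
  undup [seq a + b | a <- A, b <- B].
Definition maxS (A : seq nat) : nat := \max_(a <- A) a.

Definition alpha (N : nat) : int := ((((N %% 4) + 1) %% 4)%N)%:Z - 1.
(* N1star = (N - alpha)/4 , N2star = (N + alpha)/2 (integer division; exactness is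
   part of the theorem) *)
Definition N1star (N : nat) : int := ((N%:Z - alpha N) %/ 4)%Z.
Definition N2star (N : nat) : int := ((N%:Z + alpha N) %/ 2)%Z.
(* Sstar N = D_CNA(N1star, N2star) [N1star, N2star are nonnegative by the theorem] *)
Definition Sstar (N : nat) : seq nat := DCNA (absz (N1star N)) (absz (N2star N)).
Definition redundancy (R : realType) (N : nat) : R :=
  ((N * (N + 1))%:R / (2 * (size (sumset (Sstar N) (Sstar N)))%:R))%R.

From Pilot Require Import Defs.
From HB Require Import structures.
From mathcomp Require Import all_boot all_order all_algebra.
From mathcomp Require Import all_classical all_reals all_analysis.
From mathcomp Require Import zify ring lra.
Import Order.TTheory GRing.Theory Num.Theory.
Import numFieldNormedType.Exports.

(* D_CNA(a, b) is [0, a), the points a + j(a + 1) below (a + 1) b, and a block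
   of a consecutive points ending at M = (a + 1) b + a - 1; it is symmetric
   under x |-> M - x.  A point n <= M outside the set is q(a + 1) + r with
   0 < q < b and r < a, hence the sum of (q(a + 1) - 1) and r + 1 <= a; by the
   symmetry the sum set is all of [0, 2M].  For S*(N) the parameters satisfy
   N = 2 N1 + N2 and N2 - 2 N1 = alpha in [-1, 2], so the sum set has
   2M + 1 = (N^2 + 6N - 3 - (alpha - 1)^2) / 4 elements and R(N) -> 2. *)

Set Implicit Arguments. Unset Strict Implicit.

Definition cna_pred (a b x : nat) : bool :=
  [|| x < a, [&& a <= x, (a + 1) %| x.+1 & x < (a + 1) * b] |
      ((a + 1) * b <= x) && (x < (a + 1) * b + a)].

Lemma mem_DCNA a b x : (x \in DCNA a b) = cna_pred a b x.
Proof.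
rewrite /DCNA /cna_pred mem_undup !mem_cat /D1 /D2 /Defs.shift mem_iota add0n /=.
apply/idP/idP.
- case/or3P=> [->|/mapP[y /mapP[j]]|/mapP[y]] //.
  + rewrite mem_iota => /andP[_ jb] -> ->; apply/orP; right; apply/orP; left.
    apply/and3P; split; [lia | by apply/dvdnP; exists j.+1; lia | nia].
  + rewrite mem_iota => /andP[_ ya] ->; apply/orP; right; apply/orP; right.
    by apply/andP; lia.
- case/or3P=> [->|/and3P[ax /dvdnP[k hk] xb]|/andP[x_ge x_lt]] //.
  + apply/orP; right; apply/orP; left; apply/mapP; exists (k.-1 * (a + 1)); last by nia.
    apply/mapP; exists k.-1 => //; rewrite mem_iota /=.
    have : k * (a + 1) <= (a + 1) * b by lia.
    by rewrite mulnC leq_pmul2l //; nia.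
  + apply/orP; right; apply/orP; right.
    by apply/mapP; exists (x - (a + 1) * b); rewrite ?mem_iota; lia.
Qed.

Section CNA.
Variables a b : nat.
Hypothesis b_gt0 : 0 < b.

Local Notation top := ((a + 1) * b + a - 1).

Lemma DCNA_partsE :
  DCNA a b = D1 a ++ Defs.shift (D2 a b) a ++ Defs.shift (D1 a) ((a + 1) * b).
Proof.
rewrite /DCNA undup_id // !cat_uniq /D1 /D2 /Defs.shift iota_uniq /=.
apply/and4P; split.
- apply/hasPn => x; rewrite mem_cat => /orP[] /mapP[y].
  + by case/mapP=> j; rewrite mem_iota => /andP[_ jb] -> ->; rewrite mem_iota; lia.
  + by rewrite mem_iota => /andP[_ ya] ->; rewrite mem_iota; nia.
- by rewrite !map_inj_uniq ?iota_uniq // => x y /=; nia.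
- apply/hasPn => x /mapP[y]; rewrite mem_iota => /andP[_ ya] ->.
  by apply/negP => /mapP[z /mapP[j]]; rewrite mem_iota => /andP[_ jb] -> /=; nia.
- by rewrite map_inj_uniq ?iota_uniq // => x y /=; lia.
Qed.

Lemma size_DCNA : size (DCNA a b) = 2 * a + b.
Proof.
by rewrite DCNA_partsE !size_cat /D1 /D2 /Defs.shift !size_map !size_iota; lia.
Qed.

Lemma cna_le_top x : cna_pred a b x -> x <= top.
Proof. by case/or3P => [|/and3P[]|/andP[]]; nia. Qed.

Lemma cna_mirror x : cna_pred a b x -> cna_pred a b (top - x).
Proof.
move=> Sx; have xtop := cna_le_top Sx.
case/or3P: Sx => [xa|/and3P[ax /dvdnP[k hk] xb]|/andP[x_ge x_lt]].
- by apply/orP; right; apply/orP; right; apply/andP; lia.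
- have kb : k <= b.+1 by nia.
  apply/orP; right; apply/orP; left; apply/and3P; split; first by nia.
    by apply/dvdnP; exists (b.+1 - k); nia.
  nia.
- by apply/orP; left; lia.
Qed.

Lemma cna_small z : z <= a -> cna_pred a b z.
Proof.
rewrite leq_eqVlt => /predU1P[->|za]; last by rewrite /cna_pred za.
by apply/orP; right; apply/orP; left; rewrite leqnn addn1 dvdnn /=; nia.
Qed.

Lemma cna_sum_lower n : n <= top ->
  exists x y, [/\ cna_pred a b x, cna_pred a b y & x + y = n].
Proof.
move=> ntop; have [Sn|nSn] := boolP (cna_pred a b n).
  by exists n, 0; rewrite addn0 Sn cna_small.
have [an n_lt ndvd] : [/\ a <= n, n < (a + 1) * b & ~~ (a + 1 %| n.+1)].
  by move: nSn; rewrite /cna_pred; case: (a + 1 %| n.+1); split; lia.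
have n_eq := divn_eq n (a + 1).
have r_lt : n %% (a + 1) < a + 1 by rewrite ltn_mod addn1.
have r_neq : n %% (a + 1) != a.
  by apply: contra ndvd => /eqP r_eq; apply/dvdnP; exists (n %/ (a + 1)).+1; lia.
have q_pos : 0 < n %/ (a + 1) by nia.
exists (n %/ (a + 1) * (a + 1) - 1), (n %% (a + 1)).+1; split; last by nia.
- apply/orP; right; apply/orP; left; apply/and3P; split; first by nia.
    by apply/dvdnP; exists (n %/ (a + 1)); nia.
  nia.
- by apply: cna_small; lia.
Qed.

Lemma sumset_DCNA : sumset (DCNA a b) (DCNA a b) =i iota 0 (2 * top).+1.
Proof.
move=> n; rewrite /sumset mem_undup mem_iota /=.
apply/allpairsP/idP => [[[x y] /= [+ + ->]]|n_le].
  by rewrite !mem_DCNA => /cna_le_top + /cna_le_top; lia.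
have [n_low|n_high] := leqP n top.
  by have [x [y [Sx Sy <-]]] := cna_sum_lower n_low; exists (x, y); rewrite !mem_DCNA.
have [|x [y [Sx Sy xy]]] := @cna_sum_lower (2 * top - n); first by lia.
exists (top - x, top - y); rewrite !mem_DCNA !cna_mirror //=.
by split => //; have := cna_le_top Sx; have := cna_le_top Sy; lia.
Qed.

Lemma maxS_DCNA : maxS (DCNA a b) = top.
Proof.
apply/eqP; rewrite eqn_leq; apply/andP; split.
  by apply/bigmax_leqP_seq => x; rewrite mem_DCNA => /cna_le_top.
apply: (leq_bigmax_seq (F := id)) => //; rewrite mem_DCNA.
by rewrite -[top]subn0 cna_mirror // cna_small.
Qed.

Lemma size_sumset_DCNA : size (sumset (DCNA a b) (DCNA a b)) = (2 * top).+1.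
Proof.
rewrite -(size_iota 0 (2 * top).+1); apply/perm_size/uniq_perm; last exact: sumset_DCNA.
  exact: undup_uniq.
exact: iota_uniq.
Qed.

End CNA.

Lemma N1star_N2starE N (n1 n2 : nat) :
  (N%:Z - alpha N = n1%:Z * 4)%R -> (N%:Z + alpha N = n2%:Z * 2)%R ->
  N1star N = n1 /\ N2star N = n2.
Proof. by rewrite /N1star /N2star => -> ->; rewrite !mulzK. Qed.

Lemma Sstar_params N : 0 < N -> exists n1 n2 : nat,
  [/\ N1star N = n1, N2star N = n2, (alpha N = n2%:Z - (2 * n1)%:Z)%R,
      N = 2 * n1 + n2 & 0 < n2].
Proof.
move=> N_gt0.
suff [n1 [n2 [alphaE N_eq n2_gt0]]] : exists n1 n2 : nat,
    [/\ (alpha N = n2%:Z - (2 * n1)%:Z)%R, N = 2 * n1 + n2 & 0 < n2].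
  by exists n1, n2; have [-> ->] := @N1star_N2starE N n1 n2 ltac:(lia) ltac:(lia).
have N_eq := divn_eq N 4; set m := N %/ 4 in N_eq.
have : N %% 4 < 4 by rewrite ltn_mod.
case k_eq: (N %% 4) N_eq => [|[|[|[|k]]]] // N_eq _.
- by exists m, (2 * m); rewrite /alpha k_eq; split; lia.
- by exists m, (2 * m + 1); rewrite /alpha k_eq; split; lia.
- by exists m, (2 * m + 2); rewrite /alpha k_eq; split; lia.
- by exists m.+1, (2 * m + 1); rewrite /alpha k_eq; split; lia.
Qed.

Lemma size_sumset_DCNA_int (n1 n2 : nat) : 0 < n2 ->
  (4 * ((2 * ((n1 + 1) * n2 + n1 - 1)).+1)%:Z
     = ((2 * n1 + n2) ^ 2 + 6 * (2 * n1 + n2))%:Z - 3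
       - (n2%:Z - (2 * n1)%:Z - 1) ^+ 2)%R.
Proof.
move=> n2_gt0.
have -> : (2 * ((n1 + 1) * n2 + n1 - 1)).+1 = 2 * (n1 * n2 + n1 + n2) - 1 by nia.
by rewrite -subzn; [ring | nia].
Qed.

Lemma size_sumset_DCNA_rat (n1 n2 : nat) : 0 < n2 ->
  (((2 * ((n1 + 1) * n2 + n1 - 1)).+1%:R : rat)
     = (((2 * n1 + n2) ^ 2 + 6 * (2 * n1 + n2))%N%:R - 7) / 4
       - ((n2%:Z - (2 * n1)%:Z)%:~R - 1) ^+ 2 / 4 + 1)%R.
Proof.
move=> n2_gt0; have := congr1 (fun z : int => z%:~R : rat) (size_sumset_DCNA_int n1 n2_gt0).
by rewrite !(intrM, intrB, rmorphXn) /= -expr2 => h; lra.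
Qed.

Lemma size_sumset_Sstar_bounds N : 0 < N ->
  let s := size (sumset (Sstar N) (Sstar N)) in
  4 * s + 3 <= N ^ 2 + 6 * N <= 4 * s + 7.
Proof.
move=> N_gt0; have [n1 [n2 [N1E N2E alphaE N_eq n2_gt0]]] := Sstar_params N_gt0.
have alpha_range : (-1 <= alpha N <= 2)%R by rewrite /alpha; lia.
have sq_range : (0 <= (n2%:Z - (2 * n1)%:Z - 1) ^+ 2 <= 4)%R.
  by rewrite alphaE in alpha_range; nia.
have := size_sumset_DCNA_int n1 n2_gt0.
by rewrite /Sstar N1E N2E size_sumset_DCNA // N_eq; lia.
Qed.

Section RedundancyLimit.
Local Open Scope ring_scope.

Lemma redundancy_gap (R : realFieldType) (N S e : R) : 2 <= N ->
    N ^+ 2 + 6 * N - 7 <= 4 * S <= N ^+ 2 + 6 * N - 3 -> 20 < e * (N + 1) ->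
  `|2 - N * (N + 1) / (2 * S)| <= e.
Proof.
move=> N_ge2 /andP[S_lo S_hi] e_big.
have S_gt0 : 0 < S by nra.
have -> : 2 - N * (N + 1) / (2 * S) = (4 * S - N * (N + 1)) / (2 * S).
  by field; rewrite gt_eqF.
by rewrite ger0_norm ?divr_ge0 ?ler_pdivrMr //; nra.
Qed.

Lemma redundancy_cvg (R : realType) :
  ((fun N => redundancy R N) @ \oo --> (2 : R))%classic.
Proof.
apply/cvgrPdist_le => e e_gt0; near=> N.
have N_ge2 : (2 <= N)%N by near: N; exact: nbhs_infty_ge.
have N_big : 20 / e < N%:R by near: N; exact: nbhs_infty_gtr.
have /andP[s_lo s_hi] := size_sumset_Sstar_bounds (ltnW N_ge2).
rewrite /redundancy natrM natrD; apply: redundancy_gap.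
- by rewrite (ler_nat R 2).
- move: s_lo s_hi; rewrite -!(ler_nat R) !natrD !natrM expr2 => s_lo s_hi.
  by apply/andP; split; lra.
- by rewrite ltr_pdivrMr // in N_big; nra.
Unshelve. all: end_near.
Qed.

End RedundancyLimit.

Theorem mainTheorem5 :
  (forall N : nat, (1 <= N)%N ->
     (4 * N1star N = N%:Z - alpha N)%R /\
         (2 * N2star N = N%:Z + alpha N)%R /\
         (0 <= N1star N)%R /\ (1 <= N2star N)%R /\
         size (Sstar N) = N /\
         sumset (Sstar N) (Sstar N) =i iota 0 (2 * maxS (Sstar N)).+1 /\
       (((size (sumset (Sstar N) (Sstar N)))%:R : rat)
           = ((N ^ 2 + 6 * N)%N%:R - 7) / 4 - ((alpha N)%:~R - 1) ^+ 2 / 4 + 1)%R)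
  /\ (forall R : realType,
        (fun N : nat => redundancy R N) @ \oo --> (2%R : R))%classic.
Proof.
split; last exact: redundancy_cvg.
move=> N N_gt0; have [n1 [n2 [N1E N2E alphaE N_eq n2_gt0]]] := Sstar_params N_gt0.
rewrite /Sstar N1E N2E alphaE !absz_nat size_DCNA // maxS_DCNA // size_sumset_DCNA //.
subst N; do 5 (split; first lia).
split; [exact: sumset_DCNA | exact: size_sumset_DCNA_rat].
Qed.
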